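(* Let $n\ge 1$ and write $[i,j]=\{i,i+1,\dots,j\}\subseteq[n]$ for $i\le j$. The rowmotion orbits on $\mathcal{IC}([n])$ are exactly: (a) the orbit $\{\emptyset,[n]\}$ of size $2$ (with $\mathrm{Row}(\emptyset)=[n]$, $\mathrm{Row}([n])=\emptyset$); (b) for each integer $k$ with $1\le k<\frac n2$ (there are $\lfloor\frac{n-1}{2}\rfloor$ of them), an orbit of size $n+2$, \[\{[1,k],[2,k+1],\dots,[n-k+1,n],[1,n-k],[2,n-k+1],\dots,[k+1,n]\},\] in which $\mathrm{Row}$ maps each listed set to the next one and $[k+1,n]$ back to $[1,k]$; concretely, $\mathrm{Row}([i,j])=[i+1,j+1]$ for $j<n$ and $\mathrm{Row}([i,n])=[1,i-1]$ for $i\ge 2$; (c) when $n$ is even, one further orbit $\{[1,\frac n2],[2,\frac n2+1],\dots,[\frac n2+1,n]\}$ of size $\frac{n+2}{2}$. Consequently the order of rowmotion on $\mathcal{IC}([n])$ divides $2(n+2)$ when $n$ is odd and divides $n+2$ when $n$ is even.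
   Context: $[n]$ denotes the chain poset $1<2<\cdots<n$. All posets are finite. For a poset $P$, a subset $I\subseteq P$ is interval-closed if for all $x,y\in I$ and $z\in P$ with $x\le z\le y$ we have $z\in I$; $\mathcal{IC}(P)$ is the set of interval-closed subsets of $P$. For $x\in P$ the toggle $t_x:\mathcal{IC}(P)\to\mathcal{IC}(P)$ is defined by $t_x(I)=I\triangle\{x\}$ if $I\triangle\{x\}\in\mathcal{IC}(P)$ and $t_x(I)=I$ otherwise. Rowmotion is $\mathrm{Row}=t_{x_1}\circ t_{x_2}\circ\cdots\circ t_{x_N}:\mathcal{IC}(P)\to\mathcal{IC}(P)$, where $(x_1,\dots,x_N)$ is a linear extension of $P$ (so elements are toggled from the top of the poset down). The order of rowmotion is the least common multiple of its orbit sizes. *)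

From mathcomp Require Import all_boot.
Set Implicit Arguments. Unset Strict Implicit. Unset Printing Implicit Defensive.

Section General.
Variables (T : finType) (le : rel T).

Definition interval_closed (I : {set T}) : bool :=
  [forall x in I, forall y in I, forall z, (le x z && le z y) ==> (z \in I)].

Definition toggle (x : T) (I : {set T}) : {set T} :=
  let J := if x \in I then I :\ x else x |: I in
  if interval_closed J then J else I.

(* Row = t_{x1} o t_{x2} o ... o t_{xN} for the linear extension ext = [x1;...;xN] *)
Definition rowmotion (ext : seq T) (I : {set T}) : {set T} :=
  foldr toggle I ext.
End General.

(* The chain [n]: element x : 'I_n represents the integer x+1 in {1,...,n}. *)
Definition chain_le (n : nat) : rel 'I_n := fun x y => (x <= y)%N.

Definition IC (n : nat) (I : {set 'I_n}) : bool := interval_closed (@chain_le n) I.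

Definition Row (n : nat) : {set 'I_n} -> {set 'I_n} :=
  rowmotion (@chain_le n) (enum 'I_n).

(* the interval [i,j] = {i,...,j} of [n] (1-based); empty if j < i *)
Definition itv (n i j : nat) : {set 'I_n} :=
  [set x : 'I_n | (i <= x.+1 <= j)%N].

Definition row_order (n : nat) : nat :=
  \big[lcmn/1%N]_(A : {set 'I_n} | IC A) fingraph.order (@Row n) A.

Set Warnings "-notation-overridden".
From mathcomp Require Import all_boot zify.
Set Implicit Arguments. Unset Strict Implicit. Unset Printing Implicit Defensive.

(* The interval-closed subsets of a chain are the empty set and the intervals.
   We work with 0-based half-open segments [seg n a b] = {a, ..., b-1} of
   'I_n and relate them to the 1-based intervals [itv n i j] of the statement.
   Rowmotion toggles n-1, ..., 1, 0 in turn; writing [partial_row m] for the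
   composite of the toggles of m, ..., n-1 we follow a segment through this
   descending sweep.  Each toggle either fixes the current set (the toggled set
   would have a gap) or adds/removes an endpoint.  This gives the two rules
     Row [a, n) = [0, a)          and     Row [a, b) = [a+1, b+1)  (a < b < n),
   i.e. Row [i,j] = [i+1,j+1] and Row [i,n] = [1,i-1] in 1-based notation.
   Iterating these rules through a general lemma on cycles of a function
   yields the three families of orbits (a), (b), (c) as explicit lists of
   pairwise distinct intervals.  Since every interval of length s lies in the
   orbit indexed by min(s, n-s) (or in the orbit of the empty set when s = n),
   these orbits partition IC([n]), and the bound on the order of rowmotion
   follows because every orbit size divides 2(n+2), resp. n+2. *)

Definition seg n a b : {set 'I_n} := [set x : 'I_n | (a <= x < b)%N].

Lemma IC_seg n a b : IC (seg n a b).
Proof.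
apply/forallP=> x; apply/implyP; rewrite inE => hx.
apply/forallP=> y; apply/implyP; rewrite inE => hy.
apply/forallP=> z; apply/implyP => /andP[h1 h2]; rewrite inE.
rewrite /chain_le in h1 h2; lia.
Qed.

Lemma seg_empty n a b : (b <= a)%N -> seg n a b = set0.
Proof. by move=> h; apply/setP=> x; rewrite !inE; lia. Qed.

Lemma seg_consl n a b (x : 'I_n) : x = a :> nat -> (a < b)%N ->
  seg n a b = x |: seg n a.+1 b.
Proof. by move=> hx hab; apply/setP=> y; rewrite !inE -val_eqE /= hx; lia. Qed.

Lemma seg_consr n a b (x : 'I_n) : x = b :> nat -> (a <= b)%N ->
  seg n a b.+1 = x |: seg n a b.
Proof. by move=> hx hab; apply/setP=> y; rewrite !inE -val_eqE /= hx; lia. Qed.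

Lemma itv_seg n i j : (1 <= i)%N -> itv n i j = seg n i.-1 j.
Proof. by move=> h; apply/setP=> x; rewrite !inE; lia. Qed.

Lemma IC_itv n i j : IC (itv n i j).
Proof. by rewrite (_ : itv n i j = seg n i.-1 j) ?IC_seg //; apply/setP=> x; rewrite !inE; lia. Qed.

Lemma IC_set0 n : IC (set0 : {set 'I_n}).
Proof. by rewrite -(@seg_empty n 0 0) ?IC_seg. Qed.

Lemma gap_not_IC n (A : {set 'I_n}) (x y z : 'I_n) :
  x \in A -> y \in A -> z \notin A -> (x <= z <= y)%N -> ~~ IC A.
Proof.
move=> hx hy hz hxzy; apply/negP => /forallP/(_ x)/implyP/(_ hx)/forallP/(_ y)
  /implyP/(_ hy)/forallP/(_ z)/implyP/(_ hxzy) hz'.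
by rewrite hz' in hz.
Qed.

Lemma IC_interval n (A : {set 'I_n}) : IC A ->
  A = set0 \/ exists i j, [/\ (1 <= i)%N, (i <= j)%N, (j <= n)%N & A = itv n i j].
Proof.
move=> hA; case: (set_0Vmem A) => [->|[x hx]]; [by left | right].
case: (@arg_minnP _ x (fun y => y \in A) (@nat_of_ord n) hx) => a ha amin.
case: (@arg_maxnP _ x (fun y => y \in A) (@nat_of_ord n) hx) => b hb bmax.
exists a.+1, b.+1; split; [done | by have := amin b hb; lia | exact: ltn_ord | ].
apply/setP=> y; rewrite inE; apply/idP/idP => [hy|hy].
  by have := amin y hy; have := bmax y hy; lia.
move: hA => /forallP/(_ a)/implyP/(_ ha)/forallP/(_ b)/implyP/(_ hb)/forallP/(_ y)
  /implyP; apply; rewrite /chain_le; lia.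
Qed.

Lemma itv_inj n i j i' j' : (1 <= i <= j)%N -> (j <= n)%N ->
  (1 <= i' <= j')%N -> (j' <= n)%N -> itv n i j = itv n i' j' -> i = i' /\ j = j'.
Proof.
move=> h1 h2 h3 h4 E.
have mem k : (1 <= k <= n)%N -> (i <= k <= j)%N = (i' <= k <= j')%N.
  move=> hk; have hk' : (k.-1 < n)%N by lia.
  by move/setP: E => /(_ (Ordinal hk')); rewrite !inE /= prednK //; lia.
have := mem i; have := mem j; have := mem i'; have := mem j'.
lia.
Qed.

Lemma toggle_add n (x : 'I_n) (S : {set 'I_n}) :
  x \notin S -> IC (x |: S) -> toggle (@chain_le n) x S = x |: S.
Proof. by move=> hx hS; rewrite /toggle (negbTE hx); move: hS; rewrite /IC => ->. Qed.

Lemma toggle_del n (x : 'I_n) (S : {set 'I_n}) :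
  x \notin S -> IC S -> toggle (@chain_le n) x (x |: S) = S.
Proof. by move=> hx hS; rewrite /toggle setU11 setU1K //; move: hS; rewrite /IC => ->. Qed.

Lemma toggle_stuck n (x : 'I_n) (S : {set 'I_n}) :
  ~~ IC (if x \in S then S :\ x else x |: S) -> toggle (@chain_le n) x S = S.
Proof. by rewrite /toggle /IC => /negbTE ->. Qed.

Definition partial_row n m (I : {set 'I_n}) : {set 'I_n} :=
  foldr (toggle (@chain_le n)) I (drop m (enum 'I_n)).

Lemma partial_row0 n (I : {set 'I_n}) : Row I = partial_row 0 I.
Proof. by rewrite /partial_row drop0. Qed.

Lemma partial_row_end n (I : {set 'I_n}) : partial_row n I = I.
Proof. by rewrite /partial_row drop_oversize // size_enum_ord. Qed.

Lemma partial_row_step n m (hm : (m < n)%N) I :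
  partial_row m I = toggle (@chain_le n) (Ordinal hm) (partial_row m.+1 I).
Proof.
rewrite /partial_row (drop_nth (Ordinal hm)) ?size_enum_ord //=; congr toggle.
by apply/val_inj; rewrite /= nth_enum_ord.
Qed.

Lemma down_ind (P : nat -> Prop) lo hi :
  P hi -> (forall m, (lo <= m < hi)%N -> P m.+1 -> P m) ->
  forall m, (lo <= m <= hi)%N -> P m.
Proof.
move=> Phi IH m hm; have [d hd] : exists d, d = hi - m by eexists.
elim: d m hm hd => [|d IHd] m hm hd; first by have -> : m = hi by lia.
by apply: IH; [lia | apply: IHd; lia].
Qed.

Lemma partial_row_const n I S lo hi : (lo <= hi <= n)%N -> partial_row hi I = S ->
  (forall x : 'I_n, (lo <= x < hi)%N -> toggle (@chain_le n) x S = S) ->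
  partial_row lo I = S.
Proof.
move=> hlo hS hT; apply: (@down_ind (fun m => partial_row m I = S) lo hi) => //; last lia.
move=> m hm IH; have hmn : (m < n)%N by lia.
by rewrite (partial_row_step hmn) IH hT.
Qed.

Lemma sweep_remove n a : (a <= n)%N -> forall m, (a <= m <= n)%N ->
  partial_row m (seg n a n) = seg n a m.
Proof.
move=> han; apply: down_ind; first by rewrite partial_row_end.
move=> m hm IH; have hmn : (m < n)%N by lia.
rewrite (partial_row_step hmn) IH (@seg_consr n a m (Ordinal hmn)) //; last lia.
by rewrite toggle_del ?IC_seg // inE /=; lia.
Qed.

Lemma sweep_fill n I c : (c <= n)%N -> partial_row c I = set0 ->
  forall m, (m <= c)%N -> partial_row m I = seg n m c.
Proof.
move=> hcn h0 m hm.
apply: (@down_ind (fun m => partial_row m I = seg n m c) 0 c); last by lia.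
  by rewrite seg_empty.
move=> p hp IH; have hpn : (p < n)%N by lia.
have E := @seg_consl n p c (Ordinal hpn) erefl ltac:(lia).
by rewrite (partial_row_step hpn) IH E toggle_add -?E ?IC_seg // inE /=; lia.
Qed.

Lemma Row_top n a : (a <= n)%N -> Row (seg n a n) = seg n 0 a.
Proof.
move=> han; rewrite partial_row0; apply: (@sweep_fill n _ a) => //.
by rewrite sweep_remove ?seg_empty //; lia.
Qed.

(* Rowmotion shifts a nonempty segment not reaching the top:
   Row [a, b) = [a+1, b+1).  The toggles above b and below a are blocked by
   a gap; b is added and then a is removed, the toggles in between are
   blocked again. *)
Lemma Row_shift n a b : (a < b < n)%N -> Row (seg n a b) = seg n a.+1 b.+1.
Proof.
move=> /andP[hab hbn]; have han : (a < n)%N by lia.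
set oa := Ordinal han; set ob := Ordinal hbn.
have above : partial_row b.+1 (seg n a b) = seg n a b.
  apply: (@partial_row_const _ _ _ b.+1 n); [lia | by rewrite partial_row_end |].
  move=> x hx; apply: toggle_stuck.
  have -> : (x \in seg n a b) = false by rewrite inE; lia.
  by apply: (@gap_not_IC _ _ oa x ob); rewrite ?inE -?val_eqE /=; lia.
have add_b : partial_row b (seg n a b) = seg n a b.+1.
  have E := @seg_consr n a b ob erefl ltac:(lia).
  by rewrite (partial_row_step hbn) above E toggle_add -?E ?IC_seg // inE /=; lia.
have between : partial_row a.+1 (seg n a b) = seg n a b.+1.
  apply: (@partial_row_const _ _ _ a.+1 b); [lia | by [] |].
  move=> x hx; apply: toggle_stuck.
  have -> : (x \in seg n a b.+1) = true by rewrite inE; lia.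
  by apply: (@gap_not_IC _ _ oa ob x); rewrite ?inE -?val_eqE /=; lia.
have del_a : partial_row a (seg n a b) = seg n a.+1 b.+1.
  rewrite (partial_row_step han) between (@seg_consl n a b.+1 oa) //; last lia.
  by rewrite toggle_del ?IC_seg // inE /=; lia.
rewrite partial_row0; apply: (@partial_row_const _ _ _ 0 a); [lia | by [] |].
move=> x hx; apply: toggle_stuck.
have -> : (x \in seg n a.+1 b.+1) = false by rewrite inE; lia.
by apply: (@gap_not_IC _ _ x ob oa); rewrite ?inE -?val_eqE /=; lia.
Qed.

Lemma Row_itv n i j : (1 <= i)%N -> (i <= j)%N -> (j < n)%N ->
  Row (itv n i j) = itv n i.+1 j.+1.
Proof. by move=> h1 h2 h3; rewrite !itv_seg // Row_shift; [congr seg|]; lia. Qed.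

Lemma Row_itv_top n i : (2 <= i <= n)%N -> Row (itv n i n) = itv n 1 i.-1.
Proof. by move=> h; rewrite !itv_seg ?Row_top //; lia. Qed.

Lemma Row_set0 n : Row (set0 : {set 'I_n}) = itv n 1 n.
Proof. by rewrite -(@seg_empty n n n) // Row_top // itv_seg. Qed.

Lemma Row_full n : Row (itv n 1 n) = set0.
Proof. by rewrite itv_seg // Row_top // seg_empty. Qed.

Lemma traject_cycle (T : finType) (f : T -> T) x m : (0 < m)%N ->
  iter m f x = x -> uniq (traject f x m) ->
  [/\ orbit f x = traject f x m, order f x = m & fcycle f (traject f x m)].
Proof.
case: m => // m _ hit hu.
have hc : fcycle f (traject f x m.+1).
  rewrite /= -[X in rcons _ X]hit iterSr -trajectSr.
  by apply/fpathP; exists m.+1.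
have hx : x \in traject f x m.+1 by rewrite inE eqxx.
split => //; first by rewrite (orbitE hc hu hx) /= eqxx rot0.
by rewrite (order_cycle hc hu hx) size_traject.
Qed.

Lemma traject_shift (T : Type) (f : T -> T) (g : nat -> T) m : forall s,
  (forall i, (s <= i)%N -> (i.+1 < s + m)%N -> f (g i) = g i.+1) ->
  traject f (g s) m = map g (iota s m).
Proof.
elim: m => [//|m IH] s h /=; congr cons.
case: m IH h => [//|m] IH h.
rewrite h; [|lia|lia].
by apply: IH => i h1 h2; apply: h; lia.
Qed.

Lemma iter_shift (T : Type) (f : T -> T) (g : nat -> T) m s :
  (forall i, (s <= i < s + m)%N -> f (g i) = g i.+1) ->
  iter m f (g s) = g (s + m).
Proof.
elim: m => [|m IH] h; first by rewrite addn0.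
rewrite iterS IH; last by move=> i hi; apply: h; lia.
by rewrite h ?addnS //; lia.
Qed.

Lemma uniq_itv_family n l s c : (1 <= l)%N -> (s + c + l <= n + 2)%N -> (1 <= s)%N ->
  uniq [seq itv n i (i + l - 1) | i <- iota s c].
Proof.
move=> hl hc hs; rewrite map_inj_in_uniq ?iota_uniq // => i i' /[!mem_iota] hi hi' E.
by have [] := itv_inj _ _ _ _ E; lia.
Qed.

Lemma orbit_a n : (1 <= n)%N ->
  [/\ orbit (@Row n) set0 = [:: set0; itv n 1 n], order (@Row n) set0 = 2
    & fcycle (@Row n) [:: set0; itv n 1 n]].
Proof.
move=> hn.
have E : traject (@Row n) set0 2 = [:: set0; itv n 1 n] by rewrite /= Row_set0.
rewrite -E; apply: traject_cycle => //; first by rewrite /= Row_set0 Row_full.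
rewrite E /= andbT inE; apply/eqP => /setP/(_ (Ordinal hn)).
by rewrite !inE /=; lia.
Qed.

Definition long_orbit n k := [seq itv n i (i + k - 1) | i <- iota 1 (n - k + 1)] ++
       [seq itv n i (i + (n - k) - 1) | i <- iota 1 (k + 1)].

Lemma orbit_b n k : (1 <= k)%N -> (k.*2 < n)%N ->
  [/\ orbit (@Row n) (itv n 1 k) = long_orbit n k, order (@Row n) (itv n 1 k) = n + 2
    & fcycle (@Row n) (long_orbit n k)].
Proof.
move=> hk hkn.
pose g i := itv n i (i + k - 1); pose h i := itv n i (i + (n - k) - 1).
have shift_g i : (1 <= i)%N -> (i < n - k + 1)%N -> Row (g i) = g i.+1.
  by move=> h1 h2; rewrite /g Row_itv; [congr itv|..]; lia.
have shift_h i : (1 <= i)%N -> (i < k + 1)%N -> Row (h i) = h i.+1.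
  by move=> h1 h2; rewrite /h Row_itv; [congr itv|..]; lia.
have start : itv n 1 k = g 1 by rewrite /g; congr itv; lia.
have g_to_h : iter (n - k + 1) (@Row n) (g 1) = h 1.
  rewrite addn1 iterS (@iter_shift _ _ g); last by move=> i hi; apply: shift_g; lia.
  rewrite /g /h (_ : 1 + (n - k) + k - 1 = n)%N; last lia.
  by rewrite Row_itv_top; [congr itv|]; lia.
have h_to_g : iter (k + 1) (@Row n) (h 1) = g 1.
  rewrite addn1 iterS (@iter_shift _ _ h); last by move=> i hi; apply: shift_h; lia.
  rewrite /g /h (_ : 1 + k + (n - k) - 1 = n)%N; last lia.
  by rewrite Row_itv_top; [congr itv|]; lia.
have T : traject (@Row n) (itv n 1 k) (n + 2) = long_orbit n k.
  rewrite start (_ : n + 2 = (n - k + 1) + (k + 1))%N; last lia.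
  rewrite trajectD g_to_h (@traject_shift _ _ g); last by move=> i *; apply: shift_g; lia.
  by rewrite (@traject_shift _ _ h) // => i *; apply: shift_h; lia.
rewrite -T; apply: traject_cycle; first lia.
  rewrite start (_ : n + 2 = (k + 1) + (n - k + 1))%N; last lia.
  by rewrite iterD g_to_h h_to_g.
rewrite T /long_orbit cat_uniq !uniq_itv_family ?andbT /=; try lia.
apply/hasPn => A /mapP[i /[!mem_iota] hi ->]; apply/mapP => -[i' /[!mem_iota] hi' E].
by have [] := itv_inj _ _ _ _ E; lia.
Qed.

Definition half_orbit n := [seq itv n i (i + n./2 - 1) | i <- iota 1 (n./2 + 1)].

Lemma orbit_c n : (1 <= n)%N -> ~~ odd n ->
  [/\ orbit (@Row n) (itv n 1 n./2) = half_orbit n,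
      order (@Row n) (itv n 1 n./2) = (n + 2) %/ 2
    & fcycle (@Row n) (half_orbit n)].
Proof.
move=> hn hev.
have hk : (n./2).*2 = n by have := odd_double_half n; rewrite (negbTE hev).
rewrite /half_orbit; move: hk; set k := n./2 => hk.
pose g i := itv n i (i + k - 1).
have shift_g i : (1 <= i)%N -> (i < k + 1)%N -> Row (g i) = g i.+1.
  by move=> h1 h2; rewrite /g Row_itv; [congr itv|..]; lia.
have start : itv n 1 k = g 1 by rewrite /g; congr itv; lia.
have back : iter (k + 1) (@Row n) (g 1) = g 1.
  rewrite addn1 iterS (@iter_shift _ _ g); last by move=> i hi; apply: shift_g; lia.
  rewrite /g (_ : 1 + k + k - 1 = n)%N; last lia.
  by rewrite Row_itv_top; [congr itv|]; lia.
have T : traject (@Row n) (itv n 1 k) (k + 1) = [seq g i | i <- iota 1 (k + 1)].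
  by rewrite start (@traject_shift _ _ g) // => i *; apply: shift_g; lia.
have -> : ((n + 2) %/ 2 = k + 1)%N.
  by rewrite -hk (_ : k.*2 + 2 = (k + 1) * 2)%N ?mulnK //; lia.
rewrite -T; apply: traject_cycle; [lia | by rewrite start back |].
by rewrite T uniq_itv_family //; lia.
Qed.

(* The orbits (a), (b), (c) partition IC([n]): an interval of length s lies
   in orbit (b) for k = min(s, n-s) when 2s <> n, in orbit (c) when 2s = n,
   and the full interval lies in orbit (a). *)
Lemma IC_orbits n (hn : (1 <= n)%N) (A : {set 'I_n}) : IC A <->
  [\/ A \in orbit (@Row n) set0,
      exists2 k, (1 <= k)%N && (k.*2 < n)%N & A \in orbit (@Row n) (itv n 1 k)
    | ~~ odd n /\ A \in orbit (@Row n) (itv n 1 n./2)].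
Proof.
have [Oa _ _] := orbit_a hn; split; last first.
  case=> [| [k /andP[hk hkn]] | [hev]].
  - by rewrite Oa !inE => /orP[] /eqP ->; [exact: IC_set0 | exact: IC_itv].
  - have [-> _ _] := orbit_b hk hkn.
    by rewrite mem_cat => /orP[] /mapP[i _ ->]; exact: IC_itv.
  - by have [-> _ _] := orbit_c hn hev; move=> /mapP[i _ ->]; exact: IC_itv.
case/IC_interval => [->|[i [j [h1 h2 h3 ->]]]]; first by apply: Or31; exact: in_orbit.
have [/andP[/eqP -> /eqP ->]|not_full] := boolP ((i == 1) && (j == n)).
  by apply: Or31; rewrite Oa !inE eqxx orbT.
set s := (j - i + 1)%N.
have [hs|hs|hs] := ltngtP s.*2 n.
- apply: Or32; exists s; first by apply/andP; split => //; lia.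
  have [-> _ _] := @orbit_b n s ltac:(lia) hs.
  rewrite mem_cat; apply/orP; left; apply/mapP; exists i; rewrite ?mem_iota; last congr itv; lia.
- apply: Or32; exists (n - s)%N; first by apply/andP; split => //; lia.
  have [-> _ _] := @orbit_b n (n - s) ltac:(lia) ltac:(lia).
  rewrite mem_cat; apply/orP; right; apply/mapP; exists i; rewrite ?mem_iota; last congr itv; lia.
- have hev : ~~ odd n by rewrite -hs odd_double.
  have half : n./2 = s by rewrite -hs doubleK.
  apply: Or33; split => //; have [-> _ _] := orbit_c hn hev.
  by rewrite /half_orbit half; apply/mapP; exists i; rewrite ?mem_iota; last congr itv; lia.
Qed.

Lemma row_order_dvd n D : (1 <= n)%N -> 2 %| D -> n + 2 %| D ->
  (~~ odd n -> (n + 2) %/ 2 %| D) -> row_order n %| D.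
Proof.
move=> hn d2 dn dhalf; rewrite /row_order.
apply: (big_ind (fun d => d %| D)) => // [x y hx hy | A].
  by rewrite dvdn_lcm hx hy.
move=> /(IC_orbits hn) [hA | [k /andP[hk hkn] hA] | [hev hA]].
- have [Oa Oa_order Oa_cycle] := orbit_a hn; rewrite Oa in hA.
  by rewrite (eq_order_cycle Oa_cycle (mem_head _ _) hA) Oa_order.
- have [Ob Ob_order Ob_cycle] := orbit_b hk hkn; rewrite Ob in hA.
  have hx : itv n 1 k \in long_orbit n k by rewrite -Ob in_orbit.
  by rewrite (eq_order_cycle Ob_cycle hx hA) Ob_order.
- have [Oc Oc_order Oc_cycle] := orbit_c hn hev; rewrite Oc in hA.
  have hx : itv n 1 n./2 \in half_orbit n by rewrite -Oc in_orbit.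
  by rewrite (eq_order_cycle Oc_cycle hx hA) Oc_order; apply: dhalf.
Qed.

Theorem theorem3p2 (n : nat) (hn : (1 <= n)%N) :
  (* (a) *)
  [/\ Row (set0 : {set 'I_n}) = itv n 1 n, Row (itv n 1 n) = set0
    & order (@Row n) set0 = 2] /\
  (* the concrete action of Row on intervals *)
  (forall i j, (1 <= i)%N -> (i <= j)%N -> (j < n)%N ->
     Row (itv n i j) = itv n i.+1 j.+1) /\
  (forall i, (2 <= i <= n)%N -> Row (itv n i n) = itv n 1 i.-1) /\
  (* (b) *)
  (forall k, (1 <= k)%N -> (k.*2 < n)%N ->
     orbit (@Row n) (itv n 1 k) =
       [seq itv n i (i + k - 1) | i <- iota 1 (n - k + 1)] ++
       [seq itv n i (i + (n - k) - 1) | i <- iota 1 (k + 1)] /\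
     order (@Row n) (itv n 1 k) = n + 2) /\
  (* (c) *)
  (~~ odd n ->
     orbit (@Row n) (itv n 1 n./2) =
       [seq itv n i (i + n./2 - 1) | i <- iota 1 (n./2 + 1)] /\
     order (@Row n) (itv n 1 n./2) = (n + 2) %/ 2) /\
  (* these are exactly the orbits: they partition IC([n]) *)
  (forall A : {set 'I_n}, IC A <->
     [\/ A \in orbit (@Row n) set0,
         exists2 k, (1 <= k)%N && (k.*2 < n)%N & A \in orbit (@Row n) (itv n 1 k)
       | ~~ odd n /\ A \in orbit (@Row n) (itv n 1 n./2)]) /\
  (* consequence on the order of rowmotion *)
  (if odd n then row_order n %| 2 * (n + 2) else row_order n %| n + 2).
Proof.
have [_ Oa_order _] := orbit_a hn.
split; first by split; [exact: Row_set0 | exact: Row_full | exact: Oa_order].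
split; first exact: Row_itv.
split; first exact: Row_itv_top.
split; first by move=> k hk hkn; have [-> -> _] := orbit_b hk hkn.
split; first by move=> hev; have [-> -> _] := orbit_c hn hev.
split; first exact: IC_orbits.
case: ifP => ho; apply: row_order_dvd => //.
- by rewrite dvdn_mulr.
- by rewrite dvdn_mull.
- by rewrite ho.
- by rewrite dvdn2 oddD ho.
- by move=> _; apply: dvdn_div; rewrite dvdn2 oddD ho.
Qed.
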